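(* Let $G\subset\mathrm{SL}(2,\mathbb{C})$ be a finite subgroup and let $P\in\mathbb{C}[x,y]$. The following are equivalent: (1) $P(0,0)=0$ and $g\cdot P=P$ for all $g\in G$; (2) there exists an endomorphism $F=(f_1,f_2)$ of $\mathbb{A}^2$ with $g\cdot F=F$ for all $g\in G$ and $f_1y-f_2x=P$.
   Context: $\mathrm{SL}(2,\mathbb{C})$ acts on $\mathbb{C}[x,y]$ by $g\cdot P=P\circ g^{-1}$ and on $\mathrm{End}(\mathbb{A}^2)=\mathbb{C}[x,y]\times\mathbb{C}[x,y]$ by $g\cdot F=g\circ F\circ g^{-1}$, where $g$ is viewed as a linear automorphism of $\mathbb{A}^2$ and $F=(f_1,f_2)$ means $F(x,y)=(f_1(x,y),f_2(x,y))$. *)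

From HB Require Import structures.
From mathcomp Require Import all_boot all_order all_algebra all_field.
Set Implicit Arguments. Unset Strict Implicit. Unset Printing Implicit Defensive.
Import GRing.Theory Num.Theory.
Local Open Scope ring_scope.

(* Bivariate polynomials C[x,y] are represented as {poly {poly R}}:
   the outer variable is y, the inner variable is x, i.e.
   P = \sum_j P`_j(x) y^j. *)
Notation bipoly R := {poly {poly R}}.

Section BiPoly.
Variable R : comNzRingType.

Definition bcst (c : R) : bipoly R := c%:P%:P.
Definition bX : bipoly R := ('X)%:P.
Definition bY : bipoly R := 'X.

Definition eval2 (p u v : bipoly R) : bipoly R :=
  \sum_(j < size p) (map_poly (fun c => bcst c) p`_j).[u] * v ^+ j.

Definition at00 (p : bipoly R) : R := (p.[0]).[0].

Definition i0 : 'I_2 := ord0.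
Definition i1 : 'I_2 := ord_max.

Definition lin_app (g : 'M[R]_2) (ab : bipoly R * bipoly R) :=
  (bcst (g i0 i0) * ab.1 + bcst (g i0 i1) * ab.2,
   bcst (g i1 i0) * ab.1 + bcst (g i1 i1) * ab.2).

End BiPoly.

Section Actions.
Variable R : fieldType.

(* g . P = P o g^{-1} *)
Definition actP (g : 'M[R]_2) (p : bipoly R) : bipoly R :=
  let uv := lin_app (invmx g) (bX R, bY R) in eval2 p uv.1 uv.2.

(* g . F = g o F o g^{-1}, with F = (f1, f2) an endomorphism of A^2 *)
Definition actF (g : 'M[R]_2) (F : bipoly R * bipoly R) :=
  let uv := lin_app (invmx g) (bX R, bY R) in
  lin_app g (eval2 F.1 uv.1 uv.2, eval2 F.2 uv.1 uv.2).

Definition finite_SL2_subgroup (G : seq 'M[R]_2) : Prop :=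
  [/\ 1%:M \in G,
      forall g, g \in G -> \det g = 1,
      forall g h, g \in G -> h \in G -> g *m h \in G
    & forall g, g \in G -> invmx g \in G].

End Actions.

From HB Require Import structures.
From mathcomp Require Import all_boot all_order all_algebra all_field ring.
Import GRing.Theory Num.Theory.

Set Implicit Arguments.
Unset Strict Implicit.
Unset Printing Implicit Defensive.
Local Open Scope ring_scope.

(* Write w(u, v) = u.1 * v.2 - u.2 * v.1 for pairs of bivariate polynomials, so
   that f1 y - f2 x = w(F, (x, y)).  For (1) => (2), write P / |G| = w(A, (x, y))
     (possible as P(0,0) = 0) and average: F = \sum_(g in G) g . A is invariant
     since k G = G, and w(F, (x, y)) = \sum_g g . (P / |G|) = P (char R = 0). *)

Section Substitution.
Variable R : fieldType.
Local Notation B := (bipoly R).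

Definition coef_subst (u : B) : {rmorphism {poly R} -> B} :=
  horner_eval u \o map_poly polyC \o map_poly polyC.

Definition bsubst (w : B * B) : {rmorphism B -> B} :=
  horner_eval w.2 \o map_poly (coef_subst w.1).

Definition map_pair (f : B -> B) (w : B * B) : B * B := (f w.1, f w.2).

Lemma eval2E p u v : eval2 p u v = bsubst (u, v) p.
Proof.
have hsize : (size (map_poly (coef_subst u) p) <= size p)%N.
  by rewrite size_poly.
rewrite /eval2 /bsubst /= horner_evalE (horner_coef_wide _ hsize).
apply: eq_bigr => i _; rewrite coef_map /= /coef_subst /= horner_evalE.
by rewrite -map_poly_comp.
Qed.

Lemma bsubstX w : bsubst w (bX R) = w.1.
Proof.
by rewrite /bsubst /bX /= map_polyC horner_evalE hornerC /coef_subst /=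
  !map_polyX horner_evalE hornerX.
Qed.

Lemma bsubstY w : bsubst w (bY R) = w.2.
Proof. by rewrite /bsubst /bY /= map_polyX horner_evalE hornerX. Qed.

Lemma bsubstC w c : bsubst w (bcst c) = bcst c.
Proof.
by rewrite /bsubst /bcst /= map_polyC horner_evalE hornerC /coef_subst /=
  !map_polyC horner_evalE hornerC.
Qed.

Lemma map_pair_bsubst_xy w : map_pair (bsubst w) (bX R, bY R) = w.
Proof. by rewrite /map_pair bsubstX bsubstY; case: w. Qed.

Lemma bipoly_rmorph_ext (S : pzRingType) (f g : {rmorphism B -> S}) :
  f (bX R) = g (bX R) -> f (bY R) = g (bY R) ->
  (forall c, f (bcst c) = g (bcst c)) -> f =1 g.
Proof.
move=> fgX fgY fgC p; elim/poly_ind: p => [|p c IHp]; first by rewrite !rmorph0.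
rewrite !rmorphD !rmorphM IHp fgY; congr (_ + _).
elim/poly_ind: c => [|q d IHq]; first by rewrite !rmorph0.
have -> : (q * 'X + d%:P)%:P = q%:P * bX R + bcst d by rewrite polyCD polyCM.
by rewrite !rmorphD !rmorphM IHq fgX fgC.
Qed.

Lemma bsubst_comp w w' p :
  bsubst w' (bsubst w p) = bsubst (map_pair (bsubst w') w) p.
Proof.
pose f : {rmorphism B -> B} := bsubst w' \o bsubst w.
pose g : {rmorphism B -> B} := bsubst (map_pair (bsubst w') w).
have fE q : f q = bsubst w' (bsubst w q) by [].
have gE q : g q = bsubst (map_pair (bsubst w') w) q by [].
rewrite -fE -gE; apply: bipoly_rmorph_ext => [||c]; rewrite fE gE.
- by rewrite !bsubstX.
- by rewrite !bsubstY.
- by rewrite !bsubstC.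
Qed.

End Substitution.

Section LinearMaps.
Variable R : fieldType.
Local Notation B := (bipoly R).
Local Notation xy := (bX R, bY R).

Lemma bcstD (a b : R) : bcst (a + b) = bcst a + bcst b :> B.
Proof. by rewrite /bcst !rmorphD. Qed.

Lemma bcstM (a b : R) : bcst (a * b) = bcst a * bcst b :> B.
Proof. by rewrite /bcst !rmorphM. Qed.

Lemma mulmx22 (A C : 'M[R]_2) i j :
  (A *m C) i j = A i i0 * C i0 j + A i i1 * C i1 j.
Proof.
rewrite mxE !big_ord_recl big_ord0 addr0.
by have -> : lift ord0 ord0 = i1 :> 'I_2 by apply: val_inj.
Qed.

Lemma det22 (A : 'M[R]_2) : \det A = A i0 i0 * A i1 i1 - A i0 i1 * A i1 i0.
Proof.
rewrite (expand_det_row _ i0) !big_ord_recl big_ord0 addr0 /cofactor.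
rewrite !det_mx11 !mxE /= expr0 expr1 mul1r mulN1r mulrN.
have -> : lift ord0 ord0 = i1 :> 'I_2 by apply: val_inj.
by have -> : lift i1 ord0 = i0 :> 'I_2 by apply: val_inj.
Qed.

Lemma lin_app_comp (g h : 'M[R]_2) (w : B * B) :
  lin_app g (lin_app h w) = lin_app (g *m h) w.
Proof. by rewrite /lin_app /= !mulmx22 !bcstD !bcstM; congr pair; ring. Qed.

Lemma lin_app1 (w : B * B) : lin_app 1%:M w = w.
Proof.
case: w => a b; rewrite /lin_app /bcst !mxE /= !rmorph1 !rmorph0.
by congr pair; ring.
Qed.

Lemma lin_appD (g : 'M[R]_2) (v w : B * B) :
  lin_app g (v + w) = lin_app g v + lin_app g w.
Proof.
by case: v w => [a b] [c d]; rewrite /lin_app /=; congr pair => /=; ring.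
Qed.

Lemma lin_app0 (g : 'M[R]_2) : lin_app g 0 = 0.
Proof. by rewrite /lin_app /= !mulr0 addr0. Qed.

(* Substitutions fix constants, hence commute with linear maps. *)
Lemma map_pair_bsubst_lin_app (u w : B * B) (g : 'M[R]_2) :
  map_pair (bsubst u) (lin_app g w) = lin_app g (map_pair (bsubst u) w).
Proof. by rewrite /map_pair /lin_app !rmorphD !rmorphM !bsubstC. Qed.

Definition wedge (u v : B * B) : B := u.1 * v.2 - u.2 * v.1.

Lemma wedge_lin_app (g : 'M[R]_2) (u v : B * B) :
  wedge (lin_app g u) (lin_app g v) = bcst (\det g) * wedge u v.
Proof.
rewrite /wedge /lin_app /= det22 /bcst rmorphB !rmorphM rmorphB !rmorphM.
by ring.
Qed.

Lemma wedgeDl (u u' v : B * B) : wedge (u + u') v = wedge u v + wedge u' v.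
Proof. by case: u u' => [a b] [c d]; rewrite /wedge /=; ring. Qed.

Lemma wedge_suml (I : Type) (r : seq I) (F : I -> B * B) (v : B * B) :
  wedge (\sum_(i <- r) F i) v = \sum_(i <- r) wedge (F i) v.
Proof.
elim: r => [|i r IHr]; first by rewrite !big_nil /wedge mul0r mul0r subr0.
by rewrite !big_cons wedgeDl IHr.
Qed.

Lemma bsubst_wedge (w u v : B * B) :
  bsubst w (wedge u v) = wedge (map_pair (bsubst w) u) (map_pair (bsubst w) v).
Proof. by rewrite /wedge /map_pair rmorphB !rmorphM. Qed.

Lemma at00_wedge_xy (A : B * B) : at00 (wedge A xy) = 0.
Proof.
rewrite /at00 /wedge /bX /bY hornerD hornerN !hornerM hornerX hornerC.
rewrite mulr0 sub0r.
by rewrite hornerN hornerM hornerX mulr0 oppr0.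
Qed.

Lemma wedge_xy_of_at00 (P : B) : at00 P = 0 -> exists A, wedge A xy = P.
Proof.
move=> P00.
have take1 (S : nzRingType) (p : {poly S}) : take_poly 1 p = (p`_0)%:P.
  by apply/polyP => i; rewrite coef_take_poly coefC; case: i.
set Q := P`_0; have Q0 : Q`_0 = 0 by move: P00; rewrite /at00 !horner_coef0.
have QE : Q = drop_poly 1 Q * 'X.
  by rewrite -{1}(poly_take_drop 1 Q) take1 Q0 add0r expr1.
have PE : P = Q%:P + drop_poly 1 P * 'X.
  by rewrite -{1}(poly_take_drop 1 P) take1 expr1.
exists (drop_poly 1 P, - (drop_poly 1 Q)%:P).
by rewrite /wedge /= [RHS]PE {2}QE /bY /bX mulNr opprK -polyCM addrC.
Qed.

Lemma at00_cst_mul (c : R) (P : B) : at00 (bcst c * P) = c * at00 P.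
Proof. by rewrite /at00 /bcst !hornerM !hornerC. Qed.

End LinearMaps.

Section Actions.
Variable R : fieldType.
Local Notation B := (bipoly R).
Local Notation xy := (bX R, bY R).

(* Linear change of coordinates p |-> p(g (x, y)).  It is a plain function
   rather than an rmorphism so that rewriting with its lemmas stays cheap. *)
Definition lsubst (g : 'M[R]_2) (p : B) : B := bsubst (lin_app g xy) p.

Lemma lsubstD (g : 'M[R]_2) (p q : B) :
  lsubst g (p + q) = lsubst g p + lsubst g q.
Proof. exact: rmorphD. Qed.

Lemma lsubstM (g : 'M[R]_2) (p q : B) :
  lsubst g (p * q) = lsubst g p * lsubst g q.
Proof. exact: rmorphM. Qed.

Lemma lsubst0 (g : 'M[R]_2) : lsubst g 0 = 0.
Proof. exact: rmorph0. Qed.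

Lemma lsubstC (g : 'M[R]_2) (c : R) : lsubst g (bcst c) = bcst c.
Proof. exact: bsubstC. Qed.

Lemma lsubst_comp (g h : 'M[R]_2) (p : B) :
  lsubst h (lsubst g p) = lsubst (g *m h) p.
Proof.
have := bsubst_comp (lin_app g xy) (lin_app h xy) p.
by rewrite map_pair_bsubst_lin_app map_pair_bsubst_xy lin_app_comp.
Qed.

Lemma map_pair_lsubst_xy (g : 'M[R]_2) : map_pair (lsubst g) xy = lin_app g xy.
Proof. exact: map_pair_bsubst_xy. Qed.

Lemma map_pair_lsubst_lin_app (g h : 'M[R]_2) (w : B * B) :
  map_pair (lsubst h) (lin_app g w) = lin_app g (map_pair (lsubst h) w).
Proof. exact: map_pair_bsubst_lin_app. Qed.

Lemma lsubst_wedge (g : 'M[R]_2) (u v : B * B) :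
  lsubst g (wedge u v) = wedge (map_pair (lsubst g) u) (map_pair (lsubst g) v).
Proof. exact: bsubst_wedge. Qed.

Lemma map_pair_lsubst_comp (g h : 'M[R]_2) (w : B * B) :
  map_pair (lsubst h) (map_pair (lsubst g) w) = map_pair (lsubst (g *m h)) w.
Proof. by rewrite /map_pair !lsubst_comp. Qed.

Lemma map_pair_lsubstD (g : 'M[R]_2) (v w : B * B) :
  map_pair (lsubst g) (v + w) = map_pair (lsubst g) v + map_pair (lsubst g) w.
Proof. by case: v w => [a b] [c d]; rewrite /map_pair /= !lsubstD. Qed.

Lemma actPE (g : 'M[R]_2) (p : B) : actP g p = lsubst (invmx g) p.
Proof. by rewrite /actP eval2E. Qed.

Lemma actFE (g : 'M[R]_2) (F : B * B) :
  actF g F = lin_app g (map_pair (lsubst (invmx g)) F).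
Proof. by rewrite /actF !eval2E. Qed.

Lemma invmxM (k g : 'M[R]_2) : k \in unitmx -> g \in unitmx ->
  invmx (k *m g) = invmx g *m invmx k.
Proof.
move=> ku gu; have kgu : k *m g \in unitmx by rewrite unitmx_mul ku gu.
have kg_inv : (k *m g) *m (invmx g *m invmx k) = 1%:M.
  by rewrite mulmxA mulmxK // mulmxV.
by rewrite -[RHS](mulKmx kgu) kg_inv mulmx1.
Qed.

Lemma actF_comp (k g : 'M[R]_2) (F : B * B) : k \in unitmx -> g \in unitmx ->
  actF k (actF g F) = actF (k *m g) F.
Proof.
move=> ku gu; rewrite !actFE map_pair_lsubst_lin_app lin_app_comp.
by rewrite map_pair_lsubst_comp invmxM.
Qed.

Lemma actF_sum (g : 'M[R]_2) (I : Type) (r : seq I) (F : I -> B * B) :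
  actF g (\sum_(i <- r) F i) = \sum_(i <- r) actF g (F i).
Proof.
apply: big_morph => [u v|]; first by rewrite !actFE map_pair_lsubstD lin_appD.
by rewrite actFE /map_pair lsubst0 lin_app0.
Qed.

Lemma actP_cst_mul (g : 'M[R]_2) (c : R) (p : B) :
  actP g (bcst c * p) = bcst c * actP g p.
Proof. by rewrite !actPE lsubstM lsubstC. Qed.

(* On SL(2), F |-> w(F, (x, y)) intertwines actF and actP: the form w is
   SL(2)-invariant and (x, y) = g (lsubst g^-1 (x, y)). *)
Lemma wedge_xy_equivariant (g : 'M[R]_2) (F : B * B) : \det g = 1 ->
  wedge (actF g F) xy = actP g (wedge F xy).
Proof.
move=> det1; have gu : g \in unitmx by rewrite unitmxE det1 unitr1.
have xyE : xy = lin_app g (map_pair (lsubst (invmx g)) xy).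
  by rewrite map_pair_lsubst_xy lin_app_comp mulmxV // lin_app1.
rewrite actFE [in LHS]xyE wedge_lin_app det1 /bcst !rmorph1 mul1r.
by rewrite actPE lsubst_wedge.
Qed.

End Actions.

Section Reynolds.
Variables (R : fieldType) (G : seq 'M[R]_2).
Hypothesis SL2G : finite_SL2_subgroup G.
Local Notation B := (bipoly R).
Local Notation xy := (bX R, bY R).

Lemma SL2_unitmx (g : 'M[R]_2) : g \in G -> g \in unitmx.
Proof. by case: SL2G => _ det1 _ _ gG; rewrite unitmxE det1 ?unitr1. Qed.

Lemma sum_group_mull (V : nmodType) (f : 'M[R]_2 -> V) (k : 'M[R]_2) :
  k \in G -> \sum_(g <- undup G) f (k *m g) = \sum_(g <- undup G) f g.
Proof.
move=> kG; have ku := SL2_unitmx kG; case: SL2G => _ _ mulG invG.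
rewrite -(big_map (mulmx k) xpredT f); apply: perm_big.
apply: uniq_perm; [|exact: undup_uniq|move=> g].
  by rewrite map_inj_uniq ?undup_uniq //; exact: can_inj (mulKmx ku).
rewrite mem_undup; apply/mapP/idP => [[h]|gG].
  by rewrite mem_undup => hG ->; apply: mulG.
by exists (invmx k *m g); rewrite ?mulKVmx // mem_undup mulG ?invG.
Qed.

(* The Reynolds average (without the factor 1/|G|) of an endomorphism. *)
Definition reynoldsF (F : B * B) : B * B := \sum_(g <- undup G) actF g F.

(* The average is G-invariant since k G = G. *)
Lemma reynoldsF_invariant (F : B * B) (k : 'M[R]_2) :
  k \in G -> actF k (reynoldsF F) = reynoldsF F.
Proof.
move=> kG; rewrite /reynoldsF actF_sum.
rewrite -[RHS](sum_group_mull (fun g => actF g F) kG).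
apply: eq_big_seq => g; rewrite mem_undup => gG.
by rewrite actF_comp ?SL2_unitmx.
Qed.

Lemma wedge_reynoldsF (F : B * B) :
  (forall g, g \in G -> actP g (wedge F xy) = wedge F xy) ->
  wedge (reynoldsF F) xy = wedge F xy *+ size (undup G).
Proof.
move=> Finv; have [_ det1 _ _] := SL2G.
rewrite /reynoldsF wedge_suml.
rewrite (eq_big_seq (fun=> wedge F xy)) => [|g]; last first.
  by rewrite mem_undup => gG; rewrite wedge_xy_equivariant ?det1 ?Finv.
by rewrite big_const_seq count_predT iter_addr_0.
Qed.

End Reynolds.

Theorem mainTheorem10 (R : numClosedFieldType) (G : seq 'M[R]_2)
    (P : {poly {poly R}}) :
  finite_SL2_subgroup G ->
  ((at00 P = 0 /\ forall g, g \in G -> actP g P = P) <->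
   (exists F : {poly {poly R}} * {poly {poly R}},
      (forall g, g \in G -> actF g F = F) /\
      F.1 * bY R - F.2 * bX R = P)).
Proof.
move=> SL2G; have [G1 det1 _ _] := SL2G.
split=> [[P00 Pinv] | [F [Finv <-]]]; last first.
  split=> [|g gG]; first exact: at00_wedge_xy.
  by rewrite -wedge_xy_equivariant ?det1 ?Finv.
set n := size (undup G); set c : R := n%:R^-1.
have n_neq0 : n%:R != 0 :> R.
  by rewrite pnatr_eq0 /n; move: G1; rewrite -mem_undup; case: (undup G).
have [A wedgeA] : exists A, wedge A (bX R, bY R) = bcst c * P.
  by apply: wedge_xy_of_at00; rewrite at00_cst_mul P00 mulr0.
have Ainv g : g \in G -> actP g (wedge A (bX R, bY R)) = wedge A (bX R, bY R).
  by move=> gG; rewrite wedgeA actP_cst_mul Pinv.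
exists (reynoldsF G A); split=> [g gG|]; first exact: reynoldsF_invariant.
change (wedge (reynoldsF G A) (bX R, bY R) = P).
rewrite wedge_reynoldsF // wedgeA -mulrnAl /bcst -!rmorphMn -mulr_natr.
by rewrite mulVf // !rmorph1 mul1r.
Qed.
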